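(* Let $p$ be an odd prime, $n\ge2$, and $m_1,\dots,m_n$ integers with $1\le m_i\le p-1$. Let $\Phi=\left(\prod_{i=1}^n(s_i+1)^{m_i}-1\right)^p\in\mathbb Z[s_1,\dots,s_n]$, and for $0\le j_1,\dots,j_n\le p-1$ let $C_{j_1\cdots j_n}$ be the coefficient of $s_1^{j_1}\cdots s_n^{j_n}$ in $\Phi$ (equivalently in the image of $\Phi$ in $\mathbb Z[s_1,\dots,s_n]/(s_1^p,\dots,s_n^p)$). Then $$p^2\ \Big|\ \sum_{j_1=1}^{p-1}\cdots\sum_{j_n=1}^{p-1}(-1)^{j_1+\cdots+j_n}C_{j_1\cdots j_n}.$$ *)

From HB Require Import structures.
From mathcomp Require Import all_boot all_order all_algebra.
Set Implicit Arguments. Unset Strict Implicit. Unset Printing Implicit Defensive.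
Import Order.TTheory GRing.Theory Num.Theory.
Local Open Scope ring_scope.

(* Truncated multivariate polynomial ring Z[s_1..s_n]/(s_1^p,...,s_n^p),
   represented by coefficient functions on exponent vectors.  Only the
   coefficients at exponents e with all e_i <= p-1 are meaningful; all
   operations below compute those coefficients exactly. *)
Definition mexp (n : nat) := {ffun 'I_n -> nat}.
Definition tpoly (n : nat) := mexp n -> int.

Definition tone (n : nat) : tpoly n := fun e => (([forall k, e k == 0%N]) : int).
Definition tvar (n : nat) (i : 'I_n) : tpoly n :=
  fun e => (([forall k, e k == (k == i) :> nat]) : int).
Definition tadd n (f g : tpoly n) : tpoly n := fun e => f e + g e.
Definition tsub n (f g : tpoly n) : tpoly n := fun e => f e - g e.

Definition tmul (p n : nat) (f g : tpoly n) : tpoly n := fun e =>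
  \sum_(d : {ffun 'I_n -> 'I_p} | [forall k, (d k <= e k)%N])
     f [ffun k => nat_of_ord (d k)] * g [ffun k => (e k - d k)%N].

Definition tpow (p n : nat) (f : tpoly n) (k : nat) : tpoly n :=
  iter k (@tmul p n f) (@tone n).

Definition Phi (p n : nat) (m : 'I_n -> nat) : tpoly n :=
  tpow p (tsub (\big[@tmul p n/@tone n]_(i < n) tpow p (tadd (tvar i) (@tone n)) (m i))
               (@tone n)) p.

Definition Ccoef (p n : nat) (m : 'I_n -> nat) (j : {ffun 'I_n -> 'I_p}) : int :=
  Phi p m [ffun k => nat_of_ord (j k)].

From HB Require Import structures.
From mathcomp Require Import all_boot all_order all_algebra.
From mathcomp Require Import ring.
Import Order.TTheory GRing.Theory Num.Theory.
Set Implicit Arguments. Unset Strict Implicit. Unset Printing Implicit Defensive.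
Local Open Scope ring_scope.

(* Proof outline.
   1. On exponent vectors with all entries below p, truncated multiplication
      agrees with ordinary multiplication of power series.  The "binomial
      monomial" B_a = prod_k (1 + s_k)^(a_k), whose coefficient at e is
      prod_k C(a_k, e_k), satisfies B_a B_b = B_(a+b) there (Vandermonde).
      Hence, with X = prod_i (1 + s_i)^(m_i) = B_m, we get
      Phi = (X - 1)^p = sum_t c_p(t) B_(t m), where c_q(t) = C(q,t) (-1)^(q-t)
      are the coefficients of (Y - 1)^q.
   2. The alternating sum over j with all 0 < j_i < p then factors as
      S = sum_t c_p(t) prod_k A(t m_k),  A(N) = sum_(0<x<p) (-1)^x C(N, x).
   3. Arithmetic of A: A(0) = 0, p | A(p M), and A(N) = C(N-1, p-1) - 1 is
      congruent to -1 mod p when p does not divide N > 0.  Since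
      sum_t c_p(t) = 0 we may subtract (-1)^n from each product: the terms
      t = 0 and t = p then add up to prod_k A(p m_k), a product of n >= 2
      multiples of p, and for 0 < t < p both p | c_p(t) and
      p | prod_k A(t m_k) - (-1)^n. *)

Lemma forall_indicator (T : finType) (P : pred T) :
  (([forall k, P k]) : int) = \prod_k ((P k) : int).
Proof.
case: (boolP [forall k, P k]) => [/forallP H | /forallPn [k Hk]].
  by rewrite big1 // => k _; rewrite H.
by rewrite (bigD1 k) //= (negbTE Hk) mul0r.
Qed.

Lemma vandermonde_ord (p a b e : nat) : (e < p)%N ->
  (\sum_(x < p | (x <= e)%N) 'C(a, x) * 'C(b, e - x))%N = 'C(a + b, e).
Proof.
move=> he; rewrite -binomial.Vandermonde.
rewrite (big_ord_widen p (fun x => 'C(a, x) * 'C(b, e - x))%N he).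
by apply: eq_bigl => x; rewrite ltnS.
Qed.

Section TruncatedProducts.
Variables p n : nat.

Definition agree (f g : tpoly n) := forall e : mexp n, (forall k, e k < p)%N -> f e = g e.

Lemma agree_mul (f f' g g' : tpoly n) :
  agree f f' -> agree g g' -> agree (tmul p f g) (tmul p f' g').
Proof.
move=> Hf Hg e He; apply: eq_bigr => d /forallP Hd.
rewrite Hf ?Hg // => k; rewrite ffunE //.
by apply: leq_ltn_trans (He k); apply: leq_subr.
Qed.

Lemma agree_pow (f g : tpoly n) k : agree f g -> agree (tpow p f k) (tpow p g k).
Proof. by move=> H; elim: k => [|k IH] //=; apply: agree_mul. Qed.

Lemma tmulBl (f g h : tpoly n) e : tmul p (tsub f g) h e = tmul p f h e - tmul p g h e.
Proof. by rewrite /tmul -sumrB; apply: eq_bigr => d _; rewrite /tsub mulrBl. Qed.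

Lemma tmul_combr (f : tpoly n) K (c : 'I_K -> int) (g : 'I_K -> tpoly n) e :
  tmul p f (fun e => \sum_(t < K) c t * g t e) e = \sum_(t < K) c t * tmul p f (g t) e.
Proof.
rewrite /tmul; under eq_bigr do rewrite mulr_sumr.
rewrite exchange_big; apply: eq_bigr => t _; rewrite mulr_sumr.
by apply: eq_bigr => d _; rewrite mulrCA.
Qed.

(* The binomial monomial prod_k (1 + s_k)^(a k). *)
Definition binmono (a : 'I_n -> nat) : tpoly n := fun e => \prod_k ('C(a k, e k))%:Z.

Lemma binmono_eq (a b : 'I_n -> nat) : a =1 b -> binmono a =1 binmono b.
Proof. by move=> H e; apply: eq_bigr => k _; rewrite H. Qed.

Lemma tone_binmono : @tone n =1 binmono (fun _ => 0%N).
Proof. by move=> e; rewrite /tone forall_indicator; apply: eq_bigr => k _; rewrite bin0n. Qed.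

Lemma tvar_binmono i : tadd (tvar i) (@tone n) =1 binmono (fun k => nat_of_bool (k == i)).
Proof.
move=> e; rewrite /tadd /tvar /tone /binmono !forall_indicator.
rewrite (bigD1 i) //= [X in _ + X](bigD1 i) //= [X in _ = X](bigD1 i) //= eqxx.
have Evar : \prod_(k < n | k != i) ((e k == (k == i) :> nat) : int)
          = \prod_(k < n | k != i) ((e k == 0%N) : int).
  by apply: eq_bigr => k /negbTE ->.
have Ebin : \prod_(k < n | k != i) ('C((k == i), e k))%:Z
          = \prod_(k < n | k != i) ((e k == 0%N) : int).
  by apply: eq_bigr => k /negbTE ->; rewrite bin0n.
by rewrite Evar Ebin -mulrDl; congr (_ * _); case: (e i) => [|[|x]].
Qed.

Lemma binmono_mul (a b : 'I_n -> nat) :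
  agree (tmul p (binmono a) (binmono b)) (binmono (fun k => a k + b k)%N).
Proof.
move=> e He; rewrite /tmul /binmono.
transitivity (\prod_k \sum_(x < p | (x <= e k)%N) (('C(a k, x))%:Z * ('C(b k, e k - x))%:Z)).
  rewrite bigA_distr_big_dep; apply: eq_big => [d|d _].
    by apply/forallP/familyP => H k; have := H k.
  by rewrite -big_split /=; apply: eq_bigr => k _; rewrite !ffunE.
apply: eq_bigr => k _; rewrite -(vandermonde_ord _ _ (He k)).
by rewrite (big_morph Posz PoszD (erefl _)); apply: eq_bigr => x _; rewrite PoszM.
Qed.

Lemma binmono_pow (a : 'I_n -> nat) k :
  agree (tpow p (binmono a) k) (binmono (fun i => k * a i)%N).
Proof.
elim: k => [|k IH] e He /=.
  by rewrite tone_binmono; apply: binmono_eq => i; rewrite mul0n.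
by rewrite (agree_mul (fun _ _ => erefl) IH) // binmono_mul.
Qed.

Lemma binmono_prod (I : Type) (r : seq I) (F : I -> tpoly n) (a : I -> 'I_n -> nat) :
  (forall i, agree (F i) (binmono (a i))) ->
  agree (\big[@tmul p n/@tone n]_(i <- r) F i) (binmono (fun k => \sum_(i <- r) a i k)%N).
Proof.
move=> HF; elim: r => [|i r IH] e He.
  by rewrite big_nil tone_binmono; apply: binmono_eq => k; rewrite big_nil.
rewrite big_cons (agree_mul (HF i) IH) // binmono_mul //.
by apply: binmono_eq => k; rewrite big_cons.
Qed.

End TruncatedProducts.

(* c_q(t) = C(q, t) (-1)^(q - t), the coefficient of Y^t in (Y - 1)^q. *)
Definition sub1coef (q t : nat) : int := ('C(q, t))%:Z * (-1) ^+ (q - t).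

(* Pascal's rule for the c_q(t), i.e. (Y - 1)^(q+1) = Y (Y - 1)^q - (Y - 1)^q. *)
Lemma sub1coef0S q : sub1coef q.+1 0 = - sub1coef q 0.
Proof. by rewrite /sub1coef !bin0 !subn0 exprS !mul1r mulN1r. Qed.

Lemma sub1coefSS q t : sub1coef q.+1 t.+1 = sub1coef q t - sub1coef q t.+1.
Proof.
rewrite /sub1coef subSS binS PoszD addrC mulrDl; congr (_ + _).
have [ltq | geq] := ltnP t q; last by rewrite bin_small ?ltnS // mul0r mul0r oppr0.
by rewrite -(subnSK ltq) exprS mulN1r mulrN.
Qed.

(* Multiplying by Y - 1: the coefficients of (Y-1)^(q+1) from those of (Y-1)^q. *)
Lemma sub1coef_shift (b : nat -> int) q :
  \sum_(t < q.+1) sub1coef q t * b t.+1 - \sum_(t < q.+1) sub1coef q t * b t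
  = \sum_(t < q.+2) sub1coef q.+1 t * b t.
Proof.
have top0 : sub1coef q q.+1 = 0 by rewrite /sub1coef bin_small // mul0r.
rewrite [RHS]big_ord_recl [X in _ - X]big_ord_recl sub1coef0S /=.
under [X in _ = _ + X]eq_bigr do rewrite sub1coefSS mulrBl.
rewrite sumrB [X in _ = _ + (_ - X)]big_ord_recr /= top0 mul0r addr0.
set S0 := \sum_(i < q) _; ring.
Qed.

Lemma sum_sub1coef q : (0 < q)%N -> \sum_(t < q.+1) sub1coef q t = 0.
Proof.
move=> q0; have := exprDn (-1 : int) 1 q; rewrite addNr expr0n eqn0Ngt q0 /= => E.
by rewrite [RHS]E; apply: eq_bigr => t _; rewrite expr1n mulr1 /sub1coef -mulr_natr natz mulrC.
Qed.

Lemma sub1coef_dvd p t : prime p -> (0 < t < p)%N -> (p%:Z %| sub1coef p t)%Z.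
Proof. by move=> pr ht; apply: dvdz_mulr; rewrite dvdzE /=; apply: prime_dvd_bin. Qed.

Lemma sub1coef_sum_shiftB q (F : nat -> int) z : (0 < q)%N ->
  \sum_(t < q.+1) sub1coef q t * F t = \sum_(t < q.+1) sub1coef q t * (F t - z).
Proof.
move=> q0; under [RHS]eq_bigr do rewrite mulrBr.
by rewrite sumrB -mulr_suml sum_sub1coef // mul0r subr0.
Qed.

Lemma sub1_pow_expansion p n (X : tpoly n) (a : 'I_n -> nat) q :
  agree p X (binmono a) ->
  agree p (tpow p (tsub X (@tone n)) q)
    (fun e => \sum_(t < q.+1) sub1coef q t * binmono (fun k => t * a k)%N e).
Proof.
move=> HX; have HX1 : agree p (tsub X (@tone n)) (tsub (binmono a) (binmono (fun _ => 0%N))).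
  by move=> e He; rewrite /tsub HX // tone_binmono.
elim: q => [|q IH] e He /=.
  rewrite big_ord1 /sub1coef mul1r tone_binmono.
  by apply: binmono_eq => k; rewrite mul0n.
rewrite (agree_mul HX1 IH) // tmulBl !tmul_combr.
rewrite -(sub1coef_shift (fun t => binmono (fun k => t * a k)%N e)).
by congr (_ - _); apply: eq_bigr => t _; rewrite binmono_mul.
Qed.

Lemma Phi_expansion p n (m : 'I_n -> nat) :
  agree p (Phi p m) (fun e => \sum_(t < p.+1) sub1coef p t * binmono (fun k => t * m k)%N e).
Proof.
apply: sub1_pow_expansion.
have Hfactor i : agree p (tpow p (tadd (tvar i) (@tone n)) (m i))
                         (binmono (fun k => m i * (k == i))%N).
  move=> e He; rewrite (agree_pow _ (g := binmono (fun k => nat_of_bool (k == i)))) //.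
    by rewrite binmono_pow.
  by move=> e' _; rewrite tvar_binmono.
move=> e He; rewrite (binmono_prod _ Hfactor) //; apply: binmono_eq => k.
rewrite (bigD1 k) //= eqxx muln1 big1 ?addn0 // => i /negbTE.
by rewrite eq_sym => ->; rewrite muln0.
Qed.

Definition altbin (p N : nat) : int := \sum_(x < p | (0 < x)%N) (-1) ^+ x * ('C(N, x))%:Z.

Lemma alt_coef_sum_factor (p n : nat) (m : 'I_n -> nat) :
  \sum_(j : {ffun 'I_n -> 'I_p} | [forall i, (0 < j i)%N])
        (-1) ^+ (\sum_(i < n) nat_of_ord (j i))%N * Ccoef m j
  = \sum_(t < p.+1) sub1coef p t * \prod_(k < n) altbin p (t * m k).
Proof.
have Ecoef (j : {ffun 'I_n -> 'I_p}) : Ccoef m j =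
    \sum_(t < p.+1) sub1coef p t * \prod_k ('C(t * m k, j k))%:Z.
  rewrite /Ccoef Phi_expansion; last by move=> k; rewrite ffunE.
  by apply: eq_bigr => t _; congr (_ * _); apply: eq_bigr => k _; rewrite ffunE.
under eq_bigr do rewrite Ecoef mulr_sumr.
rewrite exchange_big; apply: eq_bigr => t _.
rewrite /altbin bigA_distr_big mulr_sumr.
apply: eq_big => [j|j _].
  by apply/forallP/ffun_onP => H k; have := H k.
rewrite (big_morph (fun k => (-1) ^+ k : int) (@exprD _ _) (expr0 _)).
by rewrite mulrCA -big_split.
Qed.

Lemma altbin0 p : altbin p 0 = 0.
Proof. by rewrite /altbin big1 // => x /lt0n_neq0 /negbTE H; rewrite bin0n H mulr0. Qed.

(* Partial alternating sums of a row of Pascal's triangle telescope. *)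
Lemma alt_partial_sum M r :
  \sum_(x < r.+1) (-1) ^+ x * ('C(M.+1, x))%:Z = (-1) ^+ r * ('C(M, r))%:Z.
Proof.
elim: r => [|r IH]; first by rewrite big_ord1 !bin0.
by rewrite big_ord_recr /= IH binS PoszD exprS; ring.
Qed.

(* Closed form of A(M+1) for odd p, from the telescoping sum at r = p - 1. *)
Lemma altbin_closed p M : odd p -> altbin p M.+1 = ('C(M, p.-1))%:Z - 1.
Proof.
move=> hp; have p0 : (0 < p)%N by case: p hp.
have := alt_partial_sum M p.-1; rewrite prednK // (bigD1 (Ordinal p0)) //= => E.
have even_pred : ~~ odd p.-1 by case: p hp {E p0} => //= p' ->.
rewrite -[(-1) ^+ p.-1]signr_odd (negbTE even_pred) expr0 !mul1r in E.
rewrite -E bin0 addrC addrK.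
by apply: eq_bigl => x; rewrite lt0n.
Qed.

Lemma altbin_unit p N : prime p -> odd p -> (0 < N)%N -> ~~ (p %| N)%N ->
  (p%:Z %| altbin p N + 1)%Z.
Proof.
move=> pr hp; case: N => // M _ ndvd.
rewrite altbin_closed // subrK dvdzE /=.
have E := mul_bin_diag M.+1 p.-1; rewrite prednK ?prime_gt0 // in E.
have : (p %| M.+1 * 'C(M, p.-1))%N by rewrite /= E dvdn_mulr.
by rewrite Euclid_dvdM // (negbTE ndvd).
Qed.

Lemma altbin_pmul p M : prime p -> (p%:Z %| altbin p (p * M))%Z.
Proof.
move=> pr; apply: rpred_sum => x x0; apply: dvdz_mull; rewrite dvdzE /=.
have E := mul_bin_diag (p * M) x.-1; rewrite prednK // in E.
have : (p %| x * 'C(p * M, x))%N by rewrite -E dvdn_mulr // dvdn_mulr.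
by rewrite Euclid_dvdM // gtnNdvd.
Qed.

Lemma dvdz_prod_sq (P : int) n (F : 'I_n -> int) : (1 < n)%N ->
  (forall k, (P %| F k)%Z) -> (P * P %| \prod_k F k)%Z.
Proof.
case: n F => [|[|n]] F //= _ H.
rewrite big_ord_recl big_ord_recl mulrA; apply: dvdz_mulr; exact: dvdz_mul.
Qed.

Lemma dvdz_prodB (P : int) n (F G : 'I_n -> int) : (forall k, (P %| F k - G k)%Z) ->
  (P %| \prod_k F k - \prod_k G k)%Z.
Proof.
move=> H; apply: (big_ind2 (fun x y => (P %| x - y)%Z)) => // x1 x2 y1 y2 h1 h2.
have -> : x1 * y1 - x2 * y2 = x1 * (y1 - y2) + (x1 - x2) * y2 by ring.
by apply: rpredD; [apply: dvdz_mull | apply: dvdz_mulr].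
Qed.

Lemma prod_altbin_sign p n (N : 'I_n -> nat) : prime p -> odd p ->
  (forall k, (0 < N k)%N /\ ~~ (p %| N k)%N) ->
  (p%:Z %| \prod_k altbin p (N k) - (-1) ^+ n)%Z.
Proof.
move=> pr hp HN; rewrite -[n in (-1) ^+ n]card_ord -prodr_const.
by apply: dvdz_prodB => k; rewrite opprK; case: (HN k) => N0 Np; apply: altbin_unit.
Qed.

Lemma ord_interior q (t : 'I_q.+1) : t != ord0 -> t != ord_max -> (0 < t < q)%N.
Proof.
by rewrite -!val_eqE /= lt0n ltn_neqAle -ltnS ltn_ord andbT => -> ->.
Qed.

Lemma interior_term_dvd p n (m : 'I_n -> nat) t :
  prime p -> odd p -> (0 < t < p)%N -> (forall i, (1 <= m i <= p.-1)%N) ->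
  (p%:Z * p%:Z %| sub1coef p t * (\prod_k altbin p (t * m k) - (-1) ^+ n))%Z.
Proof.
move=> pr hp t_inner hm; have /andP [t_gt0 t_ltp] := t_inner.
apply: dvdz_mul; first exact: sub1coef_dvd.
apply: prod_altbin_sign => // k; have /andP [mk_gt0 mk_le] := hm k.
have mk_ltp : (m k < p)%N by rewrite (leq_ltn_trans mk_le) // ltn_predL prime_gt0.
by rewrite muln_gt0 t_gt0 mk_gt0 Euclid_dvdM // !gtnNdvd.
Qed.

Theorem lemma5p1 (p n : nat) (m : 'I_n -> nat)
  (hp : prime p) (hodd : odd p) (hn : (2 <= n)%N)
  (hm : forall i, (1 <= m i <= p.-1)%N) :
  ((p ^ 2)%N%:Z %|
     \sum_(j : {ffun 'I_n -> 'I_p} | [forall i, (0 < j i)%N])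
        (-1) ^+ (\sum_(i < n) nat_of_ord (j i))%N * Ccoef m j)%Z.
Proof.
have p0 : (0 < p)%N := prime_gt0 hp.
have n0 : (0 < n)%N by apply: leq_trans hn.
set P := fun t : nat => \prod_(k < n) altbin p (t * m k).
rewrite alt_coef_sum_factor (sub1coef_sum_shiftB P ((-1) ^+ n) p0) -mulnn PoszM.
have max_neq0 : (ord_max : 'I_p.+1) != ord0 by rewrite -val_eqE /= -lt0n.
rewrite (bigD1 ord0) //= (bigD1 ord_max max_neq0) /= addrA.
(* The endpoint terms t = 0 and t = p add up to P p, as P 0 = 0. *)
have -> : sub1coef p 0 * (P 0%N - (-1) ^+ n) + sub1coef p p * (P p - (-1) ^+ n) = P p.
  have P0 : P 0%N = 0 by rewrite /P (bigD1 (Ordinal n0)) //= mul0n altbin0 mul0r.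
  rewrite P0 /sub1coef bin0 binn subn0 subnn -signr_odd hodd; ring.
apply: rpredD; first by apply: dvdz_prod_sq => // k; apply: altbin_pmul.
apply: rpred_sum => t /andP [t0 tp].
exact: interior_term_dvd (ord_interior t0 tp) hm.
Qed.
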